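(* Let $(W,S)$ be a Coxeter system with $S$ finite, $\Phi_W$ its root system viewed as a rack with $\alpha\ast\beta=t_\beta(\alpha)$, and $p:\Phi_W\to Q_W$ the map $\alpha\mapsto t_\alpha$. Then $p$ induces an isomorphism $\operatorname{Ad}(\Phi_W)\cong\operatorname{Ad}(Q_W)$, given by $e_\alpha\mapsto e_{p(\alpha)}$.
   Context: A Coxeter system $(W,S)$: $S$ finite, $m:S\times S\to\mathbb{N}\cup\{\infty\}$ with $m(s,s)=1$, $2\le m(s,t)=m(t,s)\le\infty$ for $s\ne t$, $W=\langle s\in S\mid (st)^{m(s,t)}=1\ (m(s,t)<\infty)\rangle$. Let $V$ be the real vector space with basis $\{\alpha_s\mid s\in S\}$ and $B$ the symmetric bilinear form with $B(\alpha_s,\alpha_t)=-\cos(\pi/m(s,t))$ (interpreted as $-1$ when $m(s,t)=\infty$). The geometric representation $\sigma:W\to GL(V)$ sends $s$ to $\sigma_s(\lambda)=\lambda-2B(\alpha_s,\lambda)\alpha_s$; it is faithful and preserves $B$, and elements of $\sigma(W)$ are identified with elements of $W$. The root system is $\Phi_W=\{w(\alpha_s)\mid s\in S,w\in W\}$, and for $\alpha\in\Phi_W$, $t_\alpha(\lambda)=\lambda-2B(\alpha,\lambda)\alpha$, which is an element of $W$ lying in $Q_W$. A rack is a set $X$ with a binary operation $\ast$ such that $(x\ast y)\ast z=(x\ast z)\ast(y\ast z)$ and each map $x\mapsto x\ast y$ is bijective; a quandle is a rack with $x\ast x=x$. The Coxeter quandle is $Q_W=\bigcup_{w\in W}w^{-1}Sw$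 with $x\ast y=yxy$. For a rack or quandle $X$, $\operatorname{Ad}(X)=\langle e_x\ (x\in X)\mid e_y^{-1}e_xe_y=e_{x\ast y}\ (x,y\in X)\rangle$. *)

From Stdlib Require Import Reals.
From mathcomp Require Import all_boot all_algebra.
From mathcomp Require Import Rstruct.

Set Implicit Arguments.
Unset Strict Implicit.
Unset Printing Implicit Defensive.

Import GRing.Theory.
Local Open Scope ring_scope.

(* A Coxeter matrix on the finite set S; [None] encodes m(s,t) = infinity. *)
Definition coxeter_matrix (S : finType) (m : S -> S -> option nat) : Prop :=
  [/\ forall s, m s s = Some 1%N,
      forall s t, m s t = m t s
    & forall s t, s <> t ->
        match m s t with Some k => (2 <= k)%N | None => true end].

(* V = real vector space with basis (alpha_s)_{s in S}, as coordinate functions. *)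
Definition vec (S : finType) := S -> R.

Definition Bcoef (S : finType) (m : S -> S -> option nat) (s t : S) : R :=
  match m s t with
  | Some k => - Rtrigo_def.cos (PI / INR k)
  | None => -1
  end.

Definition Bform (S : finType) (m : S -> S -> option nat) (u v : vec S) : R :=
  \sum_(s : S) \sum_(t : S) (u s * v t * Bcoef m s t).

Definition simple_root (S : finType) (s : S) : vec S :=
  fun t => if t == s then 1 else 0.

Definition refl (S : finType) (m : S -> S -> option nat) (a : vec S) : vec S -> vec S :=
  fun l t => l t - 2 * Bform m a l * a t.

Definition sigma (S : finType) (m : S -> S -> option nat) (s : S) : vec S -> vec S :=
  refl m (simple_root s).

(* W identified with sigma(W): the maps obtained as finite products of the sigma_s
   (this is the subgroup of GL(V) generated by the sigma_s, as sigma_s^2 = 1). *)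
Inductive in_W (S : finType) (m : S -> S -> option nat) : (vec S -> vec S) -> Prop :=
  | W_id : in_W m id
  | W_gen (s : S) (w : vec S -> vec S) : in_W m w -> in_W m (sigma m s \o w).

Definition in_QW (S : finType) (m : S -> S -> option nat) (f : vec S -> vec S) : Prop :=
  exists (w winv : vec S -> vec S) (s : S),
    [/\ in_W m w, in_W m winv, (forall l, winv (w l) = l), (forall l, w (winv l) = l)
      & f = winv \o sigma m s \o w].

Definition is_root (S : finType) (m : S -> S -> option nat) (a : vec S) : Prop :=
  exists (w : vec S -> vec S) (s : S), in_W m w /\ a = w (simple_root s).

Definition root_op (S : finType) (m : S -> S -> option nat) (a b : vec S) : vec S :=
  refl m b a.

Definition quandle_op (S : finType) (x y : vec S -> vec S) : vec S -> vec S :=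
  y \o x \o y.

(* A rack X is given as a subset P of a carrier T together with its operation op.
   Elements of Ad(X) are represented by words in the letters e_x (x, true) and
   e_x^{-1} (x, false), x in X, read as products from left to right. *)
Definition ad_word (T : Type) (P : T -> Prop) (u : seq (T * bool)) : Prop :=
  List.Forall (fun z => P z.1) u.

(* Equality in Ad(X): the congruence on words generated by free cancellation
   e_x e_x^{-1} = 1 = e_x^{-1} e_x and the relations e_y^{-1} e_x e_y = e_{x*y}. *)
Inductive adeq (T : Type) (P : T -> Prop) (op : T -> T -> T) :
    seq (T * bool) -> seq (T * bool) -> Prop :=
  | ad_refl u : ad_word P u -> adeq P op u u
  | ad_sym u v : adeq P op u v -> adeq P op v u
  | ad_trans u v w : adeq P op u v -> adeq P op v w -> adeq P op u w
  | ad_cong a u v b : ad_word P a -> ad_word P b -> adeq P op u v ->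
      adeq P op (a ++ u ++ b) (a ++ v ++ b)
  | ad_inv x b : P x -> adeq P op [:: (x, b); (x, ~~ b)] [::]
  | ad_rel x y : P x -> P y ->
      adeq P op [:: (y, false); (x, true); (y, true)] [:: (op x y, true)].

Definition map_word (T U : Type) (f : T -> U) (u : seq (T * bool)) : seq (U * bool) :=
  map (fun z => (f z.1, z.2)) u.

(* f : X -> Y induces an isomorphism Ad(X) -> Ad(Y), e_x |-> e_{f x}:
   the induced homomorphism on words is well defined, injective and surjective. *)
Definition induces_Ad_iso (T U : Type) (P : T -> Prop) (opT : T -> T -> T)
    (Q : U -> Prop) (opU : U -> U -> U) (f : T -> U) : Prop :=
  [/\ forall u v, adeq P opT u v -> adeq Q opU (map_word f u) (map_word f v),
      forall u v, ad_word P u -> ad_word P v ->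
        adeq Q opU (map_word f u) (map_word f v) -> adeq P opT u v
    & forall w, ad_word Q w ->
        exists u, ad_word P u /\ adeq Q opU (map_word f u) w].

(* The map p : alpha |-> t_alpha is a rack morphism onto Q_W, since
   t_(t_beta alpha) = t_beta t_alpha t_beta, so it induces a homomorphism
   Ad(Phi_W) -> Ad(Q_W) that is onto.  Two roots with the same reflection differ
   by a sign, and -alpha = alpha * alpha, so the relation
   e_alpha^-1 e_alpha e_alpha = e_(alpha * alpha) gives e_(-alpha) = e_alpha in
   Ad(Phi_W).  Hence any section q of p induces a well-defined homomorphism
   Ad(Q_W) -> Ad(Phi_W), and it is inverse to the one induced by p. *)

From Pilot Require Import Defs.
From Stdlib Require Import Reals FunctionalExtensionality ClassicalEpsilon.
From mathcomp Require Import all_boot all_algebra.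
From mathcomp Require Import Rstruct ring lra.

Set Implicit Arguments.
Unset Strict Implicit.
Unset Printing Implicit Defensive.

Import GRing.Theory.
Local Open Scope ring_scope.

Section AdGroup.

Variables (T : Type) (P : T -> Prop) (op : T -> T -> T).
Hypothesis op_closed : forall x y, P x -> P y -> P (op x y).

Lemma ad_word_cat u v : ad_word P u -> ad_word P v -> ad_word P (u ++ v).
Proof. by move=> Wu Wv; apply/List.Forall_app. Qed.

Lemma adeq_ad_word u v : adeq P op u v -> ad_word P u /\ ad_word P v.
Proof.
elim=> {u v} //.
- by move=> u v _ [].
- by move=> u v w _ [Wu _] _ [_ Ww].
- by move=> a u v b Wa Wb _ [Wu Wv]; split; do !apply: ad_word_cat.
- by move=> x b Px; split; repeat constructor.
- by move=> x y Px Py; split; repeat constructor => //; apply: op_closed.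
Qed.

Lemma adeq_cat u u' v v' :
  adeq P op u u' -> adeq P op v v' -> adeq P op (u ++ v) (u' ++ v').
Proof.
move=> Eu Ev; have [Wu Wu'] := adeq_ad_word Eu; have [Wv Wv'] := adeq_ad_word Ev.
apply: (@ad_trans _ _ _ _ (u' ++ v)).
  exact: (ad_cong (a := [::]) (List.Forall_nil _) Wv Eu).
rewrite -[u' ++ v]cats0 -[u' ++ v']cats0 -!catA.
exact: ad_cong Wu' (List.Forall_nil _) Ev.
Qed.

Lemma adeq_letter x y b : P x -> P y ->
  adeq P op [:: (x, true)] [:: (y, true)] -> adeq P op [:: (x, b)] [:: (y, b)].
Proof.
move=> Px Py Exy; case: b => //.
have Wx : ad_word P [:: (x, false)] by repeat constructor.
have Wy : ad_word P [:: (y, false)] by repeat constructor.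
(* e_x^-1 = e_x^-1 e_y e_y^-1 = e_x^-1 e_x e_y^-1 = e_y^-1 *)
apply: (@ad_trans _ _ _ _ ([:: (x, false)] ++ [:: (y, true); (y, false)])).
  by rewrite -[X in adeq _ _ X]cats0; apply/ad_sym/adeq_cat;
    [exact: ad_refl | exact: ad_inv].
apply: (@ad_trans _ _ _ _ ([:: (x, false); (x, true)] ++ [:: (y, false)])).
  exact: (ad_cong (b := [::]) Wx (List.Forall_nil _) (adeq_cat (ad_sym Exy) (ad_refl op Wy))).
exact: (adeq_cat (ad_inv op false Px) (ad_refl op Wy)).
Qed.

End AdGroup.

Section AdMorphism.

Variables (T U : Type) (P : T -> Prop) (opT : T -> T -> T).
Variables (Q : U -> Prop) (opU : U -> U -> U) (f : T -> U).
Hypothesis f_in : forall x, P x -> Q (f x).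
Hypothesis f_rel : forall x y, P x -> P y ->
  adeq Q opU [:: (f y, false); (f x, true); (f y, true)] [:: (f (opT x y), true)].

Lemma ad_word_map u : ad_word P u -> ad_word Q (map_word f u).
Proof. by elim=> {u} [|z u Pz _ IH] /=; constructor => //; apply: f_in. Qed.

Lemma adeq_map u v : adeq P opT u v -> adeq Q opU (map_word f u) (map_word f v).
Proof.
elim=> {u v}.
- by move=> u Wu; apply/ad_refl/ad_word_map.
- by move=> u v _; apply: ad_sym.
- by move=> u v w _ Euv _; apply: ad_trans.
- by move=> a u v b Wa Wb _ Euv; rewrite /map_word !map_cat; apply: ad_cong;
    rewrite -?/(map_word _ _) //; apply: ad_word_map.
- by move=> x b Px; apply/ad_inv/f_in.
- exact: f_rel.
Qed.

End AdMorphism.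

Section GeometricRepresentation.

Variables (S : finType) (m : S -> S -> option nat).
Hypothesis m_diag : forall s, m s s = Some 1%N.
Hypothesis m_sym : forall s t, m s t = m t s.

Local Notation B := (Bform m).
Local Notation t_ := (refl m).

Definition lincomb_morph (f : vec S -> vec S) := forall a u b v,
  f (fun t => a * u t + b * v t) = (fun t => a * f u t + b * f v t).

Definition isometry (f : vec S -> vec S) := forall u v, B (f u) (f v) = B u v.

Lemma Bform_sym u v : B u v = B v u.
Proof.
rewrite /Bform exchange_big; apply: eq_bigr => s _; apply: eq_bigr => t _.
by rewrite /Bcoef m_sym; ring.
Qed.

Lemma Bform_lincombr u a v b w :
  B u (fun t => a * v t + b * w t) = a * B u v + b * B u w.
Proof.
rewrite /Bform !mulr_sumr -big_split; apply: eq_bigr => s _.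
by rewrite !mulr_sumr -big_split; apply: eq_bigr => t _ /=; ring.
Qed.

Lemma Bform_lincombl u a v b w :
  B (fun t => a * v t + b * w t) u = a * B v u + b * B w u.
Proof. by rewrite Bform_sym Bform_lincombr !(Bform_sym u). Qed.

Lemma Bform_simple s : B (simple_root s) (simple_root s) = 1.
Proof.
have single (F : S -> R) : \sum_t (if t == s then F t else 0) = F s.
  by rewrite (bigD1 s) //= eqxx big1 ?addr0 // => t /negbTE ->.
rewrite /Bform -[RHS](single (fun=> 1)); apply: eq_bigr => t _.
rewrite /simple_root; case: eqP => [->|_]; last by apply: big1 => u _; ring.
rewrite -[RHS](single (fun=> 1)); apply: eq_bigr => u _; case: eqP => [->|_]; last by ring.
rewrite /Bcoef m_diag /= Rdiv_1_r cos_PI; change (1 * 1 * - - (1 : R) = 1).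
by rewrite opprK !mulr1.
Qed.

Lemma reflE a v t : t_ a v t = v t - 2 * B a v * a t.
Proof. by []. Qed.

Lemma refl_lincomb a v : t_ a v = (fun t => 1 * v t + (- (2 * B a v)) * a t).
Proof. by apply: functional_extensionality => t; rewrite reflE; ring. Qed.

Lemma refl_lincomb_morph a : lincomb_morph (t_ a).
Proof.
move=> c u d v; apply: functional_extensionality => t.
by rewrite !reflE Bform_lincombr; ring.
Qed.

Lemma refl_isometry a : B a a = 1 -> isometry (t_ a).
Proof.
move=> Baa u v; rewrite !refl_lincomb Bform_lincombl !Bform_lincombr Baa.
by rewrite (Bform_sym u a); ring.
Qed.

Lemma reflK a : B a a = 1 -> forall v, t_ a (t_ a v) = v.
Proof.
move=> Baa v; apply: functional_extensionality => t.
by rewrite (refl_lincomb a (t_ a v)) refl_lincomb Bform_lincombr Baa /=; ring.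
Qed.

Lemma Bform_reflr u a v : B u (t_ a v) = B u v - 2 * B a v * B u a.
Proof. by rewrite refl_lincomb Bform_lincombr; ring. Qed.

Lemma Bform_refll u a v : B (t_ a v) u = B v u - 2 * B a v * B a u.
Proof. by rewrite refl_lincomb Bform_lincombl; ring. Qed.

Lemma refl_conj a b : B b b = 1 -> t_ b \o t_ a \o t_ b = t_ (t_ b a).
Proof.
move=> Bbb; apply: functional_extensionality => v; apply: functional_extensionality => t.
by rewrite /= !reflE !Bform_reflr !Bform_refll Bbb (Bform_sym a b); ring.
Qed.

(* From t_a = t_b, evaluating at a gives a = B(b, a) b, and B(a, a) = 1 forces
   B(b, a) = +-1. *)
Lemma refl_inj_sign a b : B a a = 1 -> B b b = 1 -> t_ a = t_ b ->
  b = a \/ b = (fun t => - a t).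
Proof.
move=> Baa Bbb Eab.
have a_prop t : a t = B b a * b t.
  by move: (congr1 (fun f => f a t) Eab); rewrite /= !reflE Baa; lra.
have a_lincomb : a = (fun t => B b a * b t + 0 * b t).
  by apply: functional_extensionality => t; rewrite a_prop; ring.
have : B b a ^+ 2 = 1.
  by rewrite -Baa {2 3}a_lincomb Bform_lincombl !Bform_lincombr Bbb; ring.
move/eqP; rewrite sqrf_eq1 => /orP[] /eqP Bba.
  by left; apply: functional_extensionality => t; rewrite a_prop Bba mul1r.
by right; apply: functional_extensionality => t; rewrite a_prop Bba; ring.
Qed.

Lemma in_W_comp f g : in_W m f -> in_W m g -> in_W m (f \o g).
Proof. by elim=> // s w _ IH Wg; apply/W_gen/IH. Qed.

Lemma in_W_inv f : in_W m f ->
  exists g, [/\ in_W m g, forall v, g (f v) = v & forall v, f (g v) = v].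
Proof.
have sigmaK s v : Defs.sigma m s (Defs.sigma m s v) = v by apply/reflK/Bform_simple.
elim=> [|s w _ [g [Wg gK Kg]]]; first by exists id; split => //; apply: W_id.
exists (g \o Defs.sigma m s); split=> [|v|v] /=; rewrite ?sigmaK ?gK ?Kg //.
by apply: in_W_comp Wg (W_gen s (W_id m)).
Qed.

Lemma in_W_lincomb_isometry w : in_W m w -> lincomb_morph w /\ isometry w.
Proof.
elim=> [|s f _ [f_lin f_iso]]; first by [].
split=> [a u b v|u v] /=; first by rewrite f_lin; apply: refl_lincomb_morph.
by rewrite refl_isometry ?Bform_simple.
Qed.

Lemma in_W_refl_conj w g a : in_W m w -> (forall v, w (g v) = v) ->
  t_ (w a) = w \o t_ a \o g.
Proof.
move=> /in_W_lincomb_isometry[w_lin w_iso] wK.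
apply: functional_extensionality => v /=.
rewrite (refl_lincomb a (g v)) w_lin wK.
have -> : B a (g v) = B (w a) v by rewrite -w_iso wK.
by rewrite refl_lincomb.
Qed.

Lemma root_unit a : is_root m a -> B a a = 1.
Proof.
by case=> w [s [Ww ->]]; rewrite (in_W_lincomb_isometry Ww).2 Bform_simple.
Qed.

Lemma in_W_refl_root b : is_root m b -> in_W m (t_ b).
Proof.
case=> w [s [Ww ->]]; have [g [Wg _ wK]] := in_W_inv Ww.
rewrite (in_W_refl_conj _ Ww wK).
exact/in_W_comp/Wg/in_W_comp/(W_gen s (W_id m)).
Qed.

Lemma root_op_closed a b : is_root m a -> is_root m b -> is_root m (root_op m a b).
Proof.
case=> w [s [Ww ->]] Rb; exists (t_ b \o w), s; split => //.
exact/in_W_comp/Ww/in_W_refl_root.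
Qed.

Lemma in_QW_refl_root a : is_root m a -> in_QW m (t_ a).
Proof.
case=> w [s [Ww ->]]; have [g [Wg gK wK]] := in_W_inv Ww.
by exists g, w, s; split => //; apply: in_W_refl_conj.
Qed.

Lemma in_QW_refl q : in_QW m q -> exists2 a, is_root m a & t_ a = q.
Proof.
case=> w [winv [s [Ww Wwinv wK Kw ->]]].
by exists (winv (simple_root s)); [exists winv, s | apply: in_W_refl_conj].
Qed.

Lemma root_op_self a : is_root m a -> root_op m a a = (fun t => - a t).
Proof.
move=> /root_unit Baa; apply: functional_extensionality => t.
by rewrite /root_op reflE Baa; ring.
Qed.

Lemma refl_root_op a b : is_root m b -> t_ (root_op m a b) = quandle_op (t_ a) (t_ b).
Proof. by move=> /root_unit Bbb; rewrite /root_op -refl_conj. Qed.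

Lemma adeq_root_opp a b : is_root m a ->
  adeq (is_root m) (root_op m) [:: (a, b)] [:: (fun t => - a t, b)].
Proof.
move=> Ra; have Raa := root_op_closed Ra Ra.
rewrite -root_op_self //; apply: (adeq_letter root_op_closed) => //.
(* e_a = e_a^-1 e_a e_a = e_(a * a) *)
apply: ad_trans _ (ad_rel _ Ra Ra).
apply/ad_sym/(ad_cong (a := [::]) (List.Forall_nil _) _ (ad_inv _ false Ra)).
by repeat constructor.
Qed.

Definition root_of (q : vec S -> vec S) : vec S :=
  epsilon (inhabits (fun=> 0)) (fun a => is_root m a /\ t_ a = q).

Lemma root_ofP q : in_QW m q -> is_root m (root_of q) /\ t_ (root_of q) = q.
Proof.
move=> /in_QW_refl[a Ra Ea].
exact: (epsilon_spec _ (fun a => is_root m a /\ t_ a = q) (ex_intro _ a (conj Ra Ea))).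
Qed.

Lemma adeq_root_of_refl a b : is_root m a ->
  adeq (is_root m) (root_op m) [:: (root_of (t_ a), b)] [:: (a, b)].
Proof.
move=> Ra; have [Rra Era] := root_ofP (in_QW_refl_root Ra).
have [->|->] := refl_inj_sign (root_unit Ra) (root_unit Rra) (esym Era).
  by apply: ad_refl; repeat constructor.
exact/ad_sym/adeq_root_opp.
Qed.

Lemma adeq_root_of_word u : ad_word (is_root m) u ->
  adeq (is_root m) (root_op m) (map_word root_of (map_word t_ u)) u.
Proof.
elim=> {u} [|[a b] u Ra _ IH]; first exact: ad_refl.
exact: (adeq_cat root_op_closed (adeq_root_of_refl b Ra) IH).
Qed.

Lemma root_of_rel x y : in_QW m x -> in_QW m y ->
  adeq (is_root m) (root_op m)
    [:: (root_of y, false); (root_of x, true); (root_of y, true)]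
    [:: (root_of (quandle_op x y), true)].
Proof.
move=> Qx Qy; have [Ra Ea] := root_ofP Qx; have [Rb Eb] := root_ofP Qy.
have -> : quandle_op x y = t_ (root_op m (root_of x) (root_of y)).
  by rewrite refl_root_op // Ea Eb.
apply: ad_trans (ad_rel _ Ra Rb) (ad_sym (adeq_root_of_refl _ _)).
exact: root_op_closed.
Qed.

Lemma map_refl_root_of w : ad_word (in_QW m) w -> map_word t_ (map_word root_of w) = w.
Proof. by elim=> {w} [|[q b] w Qq _ /= ->] //; rewrite (root_ofP Qq).2. Qed.

End GeometricRepresentation.

Theorem theorem6p3 (S : finType) (m : S -> S -> option nat)
    (Hm : coxeter_matrix m) :
  induces_Ad_iso (is_root m) (root_op m) (in_QW m) (@quandle_op S) (refl m).
Proof.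
have [m_diag m_sym _] := Hm.
have root_of_in x : in_QW m x -> is_root m (root_of m x).
  by move=> /(root_ofP m_diag m_sym)[].
split.
- apply: adeq_map => [|x y Ra Rb]; first exact: in_QW_refl_root.
  by rewrite refl_root_op //; apply: ad_rel; apply: in_QW_refl_root.
- move=> u v Wu Wv /(adeq_map root_of_in (root_of_rel m_diag m_sym)) Euv.
  apply: ad_trans (ad_sym (adeq_root_of_word m_diag m_sym Wu)) _.
  exact: ad_trans Euv (adeq_root_of_word m_diag m_sym Wv).
- move=> w Ww; exists (map_word (root_of m) w); split.
    exact: (ad_word_map (f := root_of m) root_of_in Ww).
  by rewrite map_refl_root_of //; apply: ad_refl.
Qed.
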